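(* Let $r\in\{-1,+1\}$ and $\Phi(x,y)=r\phi(x-y)$. Let $f:\mathbb R^n\to\overline{\mathbb R}$ be left $\Phi$-convex, and let $\bar x\in\mathbb R^n$ be a point where $f$ is finite and strictly continuous. Then $\partial_\Phi f(\bar x)$ is nonempty and compact.
   Context: Standing assumption: $\phi:\mathbb R^n\to\mathbb R$ is convex, finite-valued, differentiable and strictly convex (Legendre with full domain), super-coercive. Left $\Phi$-convex: $f=\sup_{i\in I}\Phi(\cdot,y_i)-\beta_i$ for some family $(y_i,\beta_i)\in\mathbb R^n\times\overline{\mathbb R}$. For $\bar x\in\operatorname{dom}f$, $\partial_\Phi f(\bar x)=\{\bar y: f(x)\ge f(\bar x)+\Phi(x,\bar y)-\Phi(\bar x,\bar y)\ \forall x\}$. $f$ is strictly continuous at $\bar x$ (with $f(\bar x)$ finite) if $\limsup_{x,x'\to\bar x,\,x\neq x'}|f(x)-f(x')|/\|x-x'\|<\infty$. *)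

From HB Require Import structures.
From mathcomp Require Import all_boot all_order all_algebra.
From mathcomp Require Import all_classical all_reals all_analysis.
Set Implicit Arguments. Unset Strict Implicit. Unset Printing Implicit Defensive.
Import Order.TTheory GRing.Theory Num.Theory.
Import numFieldNormedType.Exports.
Local Open Scope classical_set_scope.
Local Open Scope ring_scope.

Definition convex_fun {R : realType} {n : nat} (phi : 'rV[R]_n -> R) : Prop :=
  forall (x y : 'rV[R]_n) (t : R), 0 <= t -> t <= 1 ->
    phi (t *: x + (1 - t) *: y) <= t * phi x + (1 - t) * phi y.

Definition strictly_convex_fun {R : realType} {n : nat} (phi : 'rV[R]_n -> R) : Prop :=
  forall (x y : 'rV[R]_n) (t : R), x != y -> 0 < t -> t < 1 ->
    phi (t *: x + (1 - t) *: y) < t * phi x + (1 - t) * phi y.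

Definition super_coercive {R : realType} {n : nat} (phi : 'rV[R]_n -> R) : Prop :=
  forall M : R, exists r0 : R, forall x : 'rV[R]_n, r0 <= `|x| -> M * `|x| <= phi x.

(* Standing assumption on phi: Legendre with full domain, super-coercive *)
Definition standing_phi {R : realType} {n : nat} (phi : 'rV[R]_n -> R) : Prop :=
  [/\ convex_fun phi, strictly_convex_fun phi,
      (forall x, differentiable phi x) & super_coercive phi].

Definition Phi_of {R : realType} {n : nat} (r : R) (phi : 'rV[R]_n -> R)
  (x y : 'rV[R]_n) : R := r * phi (x - y).

Definition left_Phi_convex {R : realType} {n : nat}
  (Phi : 'rV[R]_n -> 'rV[R]_n -> R) (f : 'rV[R]_n -> \bar R) : Prop :=
  exists (I : Type) (y : I -> 'rV[R]_n) (beta : I -> \bar R),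
    forall x, f x = ereal_sup [set ((Phi x (y i))%:E - beta i)%E | i in [set: I]].

Definition Phi_subdiff {R : realType} {n : nat}
  (Phi : 'rV[R]_n -> 'rV[R]_n -> R) (f : 'rV[R]_n -> \bar R) (xbar : 'rV[R]_n)
  : set 'rV[R]_n :=
  [set ybar | forall x, (f xbar + (Phi x ybar - Phi xbar ybar)%:E <= f x)%E].

(* strict continuity at xbar (f xbar finite):
   limsup_{x,x' -> xbar, x <> x'} |f x - f x'| / |x - x'| < oo, written out *)
Definition strictly_continuous_at {R : realType} {n : nat}
  (f : 'rV[R]_n -> \bar R) (xbar : 'rV[R]_n) : Prop :=
  f xbar \is a fin_num /\
  exists (K : R) (d : R), 0 < d /\
    forall x x' : 'rV[R]_n, ball xbar d x -> ball xbar d x' -> x != x' ->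
      (`|f x - f x'| <= K%:E * (`|x - x'|)%:E)%E.

From HB Require Import structures.
From mathcomp Require Import all_boot all_order all_algebra.
From mathcomp Require Import all_classical all_reals all_analysis.
From mathcomp Require Import ring lra.
Import Order.TTheory GRing.Theory Num.Theory.
Import numFieldNormedType.Exports.
Local Open Scope classical_set_scope.
Local Open Scope ring_scope.

(** Strict continuity is only used to bound [f] from above by some [c + C] on a
  sphere [|v| = d] around [xbar], where [f xbar = c].  If [yb] satisfies the
  subgradient inequality up to [1] at every point of that sphere, then
  [r (phi (xbar - yb + v) - phi (xbar - yb)) <= C + 1] for all [|v| = d], and
  convexity plus super-coercivity of [phi] confine [xbar - yb] to a ball.
  The centres [y i] of the pieces that are [e]-active at [xbar] are such points,
  so they cluster at some [p] of a compact ball as [e -> 0]; continuity of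
  [Phi] in its second argument turns the [e]-inequalities into the exact
  subgradient inequality at [p].  The subdifferential is closed, as an
  intersection of closed sets, and lies in the same ball. *)

Section ConvexRadial.
Context {R : realType} {n : nat} (phi : 'rV[R]_n -> R).
Hypothesis phi_convex : convex_fun phi.

Lemma convex_slope_outward (z : 'rV[R]_n) (s d : R) : 0 < s -> 0 < d ->
  d * (phi z - phi 0) <= s * (phi (z + (d / s) *: z) - phi z).
Proof.
move=> s0 d0; set t := s / (s + d).
have t0 : 0 <= t by rewrite /t divr_ge0 //; lra.
have t1 : t <= 1 by rewrite /t ler_pdivrMr; lra.
have := phi_convex (z + (d / s) *: z) 0 t t0 t1.
have -> : t *: (z + (d / s) *: z) + (1 - t) *: 0 = z.
  rewrite scaler0 addr0 -{1}(scale1r z) -scalerDl scalerA.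
  have -> : t * (1 + d / s) = 1 by rewrite /t; field; lra.
  by rewrite scale1r.
move=> /(ler_wpM2l (ltW (addr_gt0 s0 d0))).
have -> : (s + d) * (t * phi (z + (d / s) *: z) + (1 - t) * phi 0) =
  s * phi (z + (d / s) *: z) + d * phi 0 by rewrite /t; field; lra.
lra.
Qed.

Lemma convex_slope_inward (z : 'rV[R]_n) (s d : R) : 0 < d -> d <= s ->
  d * (phi z - phi 0) <= s * (phi z - phi (z - (d / s) *: z)).
Proof.
move=> d0 ds; set t := (s - d) / s.
have t0 : 0 <= t by rewrite /t divr_ge0 //; lra.
have t1 : t <= 1 by rewrite /t ler_pdivrMr; lra.
have := phi_convex z 0 t t0 t1.
have -> : t *: z + (1 - t) *: 0 = z - (d / s) *: z.
  rewrite scaler0 addr0 -{2}(scale1r z) -scaleNr -scalerDl.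
  by congr (_ *: _); rewrite /t; field; lra.
move=> /(ler_wpM2l (ltW (lt_le_trans d0 ds))).
have -> : s * (t * phi z + (1 - t) * phi 0) = (s - d) * phi z + d * phi 0.
  by rewrite /t; field; lra.
lra.
Qed.

Lemma convex_sphere_increment (r d : R) (z : 'rV[R]_n) :
  r = 1 \/ r = -1 -> 0 < d -> d <= `|z| ->
  exists2 v : 'rV[R]_n, `|v| = d &
    d * (phi z - phi 0) <= `|z| * (r * (phi (z + v) - phi z)).
Proof.
move=> r1 d0 dz; have z0 : 0 < `|z| := lt_le_trans d0 dz.
have nv : `|(d / `|z|) *: z| = d.
  by rewrite normrZ ger0_norm ?divr_ge0 ?ltW // divfK ?gt_eqF.
case: r1 => ->.
  by exists ((d / `|z|) *: z); rewrite // mul1r convex_slope_outward.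
exists (- ((d / `|z|) *: z)); first by rewrite normrN.
by rewrite mulN1r opprB convex_slope_inward.
Qed.

Hypothesis phi_coercive : super_coercive phi.

Lemma super_coercive_sphere_increment_bounded (r d C : R) :
  r = 1 \/ r = -1 -> 0 < d ->
  exists2 rho : R, 0 < rho & forall z : 'rV[R]_n,
    (forall v, `|v| = d -> r * (phi (z + v) - phi z) <= C) -> `|z| <= rho.
Proof.
(* [M] is chosen so that [d * (M * |z|)] exceeds the radial estimate when [1 < |z|]. *)
move=> r1 d0; set M := (C + d * `|phi 0| + 1) / d.
have [r0 hr0] := phi_coercive M.
exists (Num.max 1 (Num.max d r0)) => [|z incr]; first by rewrite lt_max ltr01.
rewrite leNgt; apply/negP.
rewrite !gt_max => /and3P[s1 sd sr0].
have [v nv grow] := convex_sphere_increment r d z r1 d0 (ltW sd).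
have le_incr : `|z| * (r * (phi (z + v) - phi z)) <= `|z| * C.
  by rewrite ler_wpM2l ?incr //; lra.
have lin : d * (M * `|z|) <= d * phi z by rewrite ler_wpM2l ?hr0 ?ltW //.
have eM : d * (M * `|z|) = C * `|z| + d * `|phi 0| * `|z| + `|z|.
  by rewrite /M; field; lra.
have phi0 : d * phi 0 <= d * `|phi 0| by rewrite ler_wpM2l ?ler_norm ?ltW.
have pos : 0 <= d * `|phi 0| * (`|z| - 1).
  by rewrite !mulr_ge0 // ?subr_ge0 ltW.
lra.
Qed.

End ConvexRadial.

Lemma closed_EFin_le (R : realFieldType) (a : \bar R) :
  closed [set t : R | (t%:E <= a)%E].
Proof.
case: a => [a||].
- by under eq_set do rewrite lee_fin; exact: closed_le.
- rewrite (_ : mkset _ = setT); first exact: closedT.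
  by apply/seteqP; split=> t //= _; exact: leey.
- rewrite (_ : mkset _ = set0); first exact: closed0.
  by apply/seteqP; split=> t //=; rewrite leeNy_eq.
Qed.

Lemma compact_closed_ball_rV {R : realType} {n : nat} (x : 'rV[R]_n) (rho : R) :
  0 < rho -> compact (closed_ball x rho).
Proof.
move=> rho0; apply: bounded_closed_compact; last exact: closed_ball_closed.
apply: filterS (nbhs_pinfty_ge (num_real (`|x| + rho))) => M xM z /= zx.
rewrite closed_ballE // /closed_ball_ /= in zx.
have := ler_normB x (x - z); rewrite opprB addrCA subrr addr0 => /le_trans.
by apply; apply: le_trans xM; rewrite lerD2l.
Qed.

Lemma strictly_continuous_sphere_ub {R : realType} {n : nat}
    {f : 'rV[R]_n -> \bar R} {xbar : 'rV[R]_n} {c : R} :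
  f xbar = c%:E -> strictly_continuous_at f xbar ->
  exists d C : R, 0 < d /\ forall v, `|v| = d -> (f (xbar + v)%R <= (c + C)%:E)%E.
Proof.
move=> fc [_ [K [d [d0 lip]]]]; exists (d / 2), (K * (d / 2)); split => [|v nv].
  by rewrite divr_gt0.
have v0 : v != 0 by rewrite -normr_gt0 nv divr_gt0.
have xv_ball : ball xbar d (xbar + v).
  by rewrite -ball_normE /= opprD addrA subrr add0r normrN nv; lra.
have := lip _ _ xv_ball (ballxx _ d0); rewrite -subr_eq0 addrAC subrr add0r.
rewrite fc nv => /(_ v0); case: (f (xbar + v)) => [a||] //=.
by rewrite -EFinM !lee_fin ler_norml => /andP[_]; lra.
Qed.

Section PhiSubdifferential.
Context {R : realType} {n : nat} (phi : 'rV[R]_n -> R) (r : R).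
Context {I : Type} (y : I -> 'rV[R]_n) (beta : I -> \bar R).
Context (f : 'rV[R]_n -> \bar R) (xbar : 'rV[R]_n) (c : R).
Hypothesis phi_cont : continuous phi.
Hypothesis f_sup : forall x,
  f x = ereal_sup [set ((Phi_of r phi x (y i))%:E - beta i)%E | i in [set: I]].
Hypothesis f_xbar : f xbar = c%:E.

Local Notation Phi := (Phi_of r phi).

Definition approx_subgrad (x : 'rV[R]_n) (e : R) : set 'rV[R]_n :=
  [set yb | ((c - e + (Phi x yb - Phi xbar yb))%:E <= f x)%E].

Definition near_active (e : R) : set 'rV[R]_n :=
  y @` [set i | ((c - e)%:E < (Phi xbar (y i))%:E - beta i)%E].

Lemma Phi_subdiffE :
  Phi_subdiff Phi f xbar = \bigcap_(x in setT) approx_subgrad x 0.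
Proof.
apply/seteqP; split=> yb /= sub x.
- by move=> _; rewrite /approx_subgrad /= subr0 EFinD -f_xbar; exact: sub.
- by rewrite f_xbar -EFinD -(subr0 c); exact: sub.
Qed.

Lemma continuous_Phi_right (x : 'rV[R]_n) : continuous (Phi x).
Proof.
move=> p; apply: (@continuousM _ _ (cst r) (phi \o (fun q => x - q))).
  exact: cst_continuous.
apply: continuous_comp; last exact: phi_cont.
by apply: continuousB; [exact: cst_continuous | exact: cvg_id].
Qed.

Lemma closed_approx_subgrad x e : closed (approx_subgrad x e).
Proof.
have -> : approx_subgrad x e =
    (cst (c - e) + (Phi x - Phi xbar)) @^-1` [set t | (t%:E <= f x)%E] by [].
apply: preimage_closed; last exact: closed_EFin_le.
move=> p _; apply: continuousD; first exact: cst_continuous.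
by apply: continuousB; exact: continuous_Phi_right.
Qed.

Lemma approx_subgradS x e1 e2 :
  e1 <= e2 -> approx_subgrad x e1 `<=` approx_subgrad x e2.
Proof.
by move=> e12 yb /=; apply: le_trans; rewrite lee_fin lerD2r lerD2l lerN2.
Qed.

Lemma approx_subgrad_gt0 x yb :
  (forall e, 0 < e -> approx_subgrad x e yb) -> approx_subgrad x 0 yb.
Proof.
move=> sub; apply/lee_subgt0Pr => e e0.
by rewrite subr0 -EFinB addrAC; exact: sub.
Qed.

Lemma closed_Phi_subdiff : closed (Phi_subdiff Phi f xbar).
Proof.
by rewrite Phi_subdiffE; apply: closed_bigI => x _; exact: closed_approx_subgrad.
Qed.

Lemma near_active_neq0 e : 0 < e -> near_active e !=set0.
Proof.
move=> e0; have : ((c - e)%:E < f xbar)%E by rewrite f_xbar lte_fin; lra.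
by rewrite f_sup => /ereal_sup_gt [_ [i _ <-] lt_i]; exists (y i), i.
Qed.

Lemma near_activeS e1 e2 : e1 <= e2 -> near_active e1 `<=` near_active e2.
Proof.
move=> e12 _ [i lt_i <-]; exists i => //; apply: le_lt_trans lt_i.
by rewrite lee_fin lerD2l lerN2.
Qed.

Lemma near_active_sub x e : near_active e `<=` approx_subgrad x e.
Proof.
move=> _ [i /= lt_i <-].
have : ((Phi x (y i))%:E - beta i <= f x)%E.
  by rewrite f_sup; apply: ereal_sup_ubound; exists i.
case: (beta i) lt_i => [b||] /=; rewrite ?addeNy ?addey //.
- by rewrite -!EFinD lte_fin => lt_i; apply: le_trans; rewrite lee_fin; lra.
- by move=> _; rewrite leye_eq => /eqP fx; rewrite /approx_subgrad /= fx leey.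
Qed.

Lemma near_active_proper_filter :
  ProperFilter (filter_from [set e : R | 0 < e] near_active).
Proof.
apply: filter_from_proper; last exact: near_active_neq0.
apply: filter_from_filter; first by exists 1; rewrite /= ltr01.
move=> e1 e2 e1_gt0 e2_gt0; exists (Num.min e1 e2).
  by rewrite /= lt_min e1_gt0.
by move=> yb act; split; apply: near_activeS act; rewrite ge_min lexx ?orbT.
Qed.

Hypothesis phi_convex : convex_fun phi.
Hypothesis phi_coercive : super_coercive phi.
Hypothesis r_sign : r = 1 \/ r = -1.
Variables d C : R.
Hypothesis d_gt0 : 0 < d.
Hypothesis f_sphere_ub : forall v, `|v| = d -> (f (xbar + v)%R <= (c + C)%:E)%E.

Lemma approx_subgrad_sphere_bounded : exists2 rho : R, 0 < rho &
  forall yb, (forall v, `|v| = d -> approx_subgrad (xbar + v) 1 yb) ->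
  closed_ball xbar rho yb.
Proof.
have [rho rho_gt0 bound] := @super_coercive_sphere_increment_bounded _ _ phi
  phi_convex phi_coercive r d (C + 1) r_sign d_gt0.
exists rho => // yb sub; rewrite closed_ballE // /closed_ball_ /=.
apply: bound => v nv; have := le_trans (sub v nv) (f_sphere_ub v nv).
by rewrite lee_fin /Phi_of (addrAC xbar v) mulrBr; lra.
Qed.

Theorem Phi_subdiff_neq0_compact :
  Phi_subdiff Phi f xbar !=set0 /\ compact (Phi_subdiff Phi f xbar).
Proof.
have [rho rho_gt0 ballP] := approx_subgrad_sphere_bounded.
have cB := compact_closed_ball_rV xbar rho rho_gt0.
have subB : Phi_subdiff Phi f xbar `<=` closed_ball xbar rho.
  move=> yb; rewrite Phi_subdiffE => sub; apply: ballP => v _.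
  by apply: (approx_subgradS _ _ _ ler01); exact: sub.
split; last exact: subclosed_compact closed_Phi_subdiff cB subB.
have activeB :
    filter_from [set e : R | 0 < e] near_active (closed_ball xbar rho).
  exists 1; rewrite /= ?ltr01 // => yb act.
  by apply: ballP => v _; exact: near_active_sub.
have [p [_ clp]] := cB _ near_active_proper_filter activeB.
exists p; rewrite Phi_subdiffE => x _; apply: approx_subgrad_gt0 => e e_gt0.
have /closure_id -> := closed_approx_subgrad x e.
move: clp; rewrite clusterE => /(_ (near_active e)) clp.
by apply: closureS (clp _); [exact: near_active_sub | exists e].
Qed.

End PhiSubdifferential.

Theorem mainTheorem9 (R : realType) (n : nat) (phi : 'rV[R]_n -> R) (r : R)
  (f : 'rV[R]_n -> \bar R) (xbar : 'rV[R]_n) :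
  standing_phi phi ->
  (r = 1 \/ r = -1) ->
  left_Phi_convex (Phi_of r phi) f ->
  f xbar \is a fin_num ->
  strictly_continuous_at f xbar ->
  Phi_subdiff (Phi_of r phi) f xbar !=set0 /\
  compact (Phi_subdiff (Phi_of r phi) f xbar).
Proof.
move=> [phi_convex _ phi_diff phi_coercive] r_sign [I [y [beta f_sup]]] f_fin sc.
have phi_cont : continuous phi := fun x => differentiable_continuous (phi_diff x).
have f_xbar : f xbar = (fine (f xbar))%:E by rewrite fineK.
have [d [C [d_gt0 f_sphere_ub]]] := strictly_continuous_sphere_ub f_xbar sc.
exact: (Phi_subdiff_neq0_compact _ _ _ _ _ _ _ phi_cont f_sup f_xbar
  phi_convex phi_coercive r_sign _ _ d_gt0 f_sphere_ub).
Qed.
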